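(* Let $\mathcal N'$ be the set of pairs of integers $(p,u)$ such that either $p=1$ and $u=0$, or $u=2n\geq 2^m\geq p\geq 2$ for some integers $m,n$. Let $\mathcal N=\mathcal N'\cup\{(p,\infty): p\geq 2 \text{ an integer or } p=\infty\}$. If $F$ is a real field, then $(p(F),u(F))\in\mathcal N$. If in addition $I^k_tF=0$ for some $k\geq 1$, then $p(F)\leq 2^{k-1}$.
   Context: All fields have characteristic $\neq 2$, forms are nondegenerate and finite-dimensional. A field is real if it admits an ordering. $WF$ is the Witt ring, $IF$ its fundamental ideal, $I^kF$ its $k$-th power, $W_tF$ the torsion part of $WF$ (for real $F$, the forms of signature $0$ at every ordering), and $I^k_tF=I^kF\cap W_tF$. The Pythagoras number $p(F)$ is the least integer $p\geq1$ such that every sum of squares in $F$ is a sum of $p$ squares ($\infty$ if none exists). The $u$-invariant $u(F)$ is the supremum of dimensions of anisotropic forms over $F$ whose class lies in $W_tF$ (torsion forms); for nonreal $F$ this is the supremum of dimensions of all anisotropic forms. *)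

(* Quadratic forms over a field F of characteristic <> 2 are
   represented by diagonalizations <a_1,...,a_n> (seq F); every nondegenerate
   form is isometric to such a diagonal form, and all notions below are
   invariant under isometry. *)
From HB Require Import structures.
From mathcomp Require Import all_boot all_order all_algebra.
From Stdlib Require Import Classical ClassicalEpsilon.
Set Implicit Arguments. Unset Strict Implicit. Unset Printing Implicit Defensive.
Import Order.TTheory GRing.Theory Num.Theory.
Local Open Scope ring_scope.

(* Extended naturals: None stands for infinity. *)
Definition ext_min (P : nat -> Prop) : option nat :=
  match excluded_middle_informative
          (exists n, P n /\ forall m, P m -> (n <= m)%N) with
  | left H => Some (proj1_sig (constructive_indefinite_description _ H))
  | right _ => None
  end.

Definition ext_sup (S : nat -> Prop) : option nat :=
  ext_min (fun b => forall n, S n -> (n <= b)%N).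

Section Forms.
Variable F : fieldType.

Definition is_ordering (P : F -> Prop) : Prop :=
  [/\ (forall x y, P x -> P y -> P (x + y)),
      (forall x y, P x -> P y -> P (x * y)),
      (forall x, P x \/ P (- x)) &
      (forall x, P x -> P (- x) -> x = 0)].

Definition real_field : Prop := exists P, is_ordering P.

Definition sum_of_n_squares (n : nat) (x : F) : Prop :=
  exists l : seq F, size l = n /\ x = \sum_(y <- l) y ^+ 2.
Definition sum_of_squares (x : F) : Prop :=
  exists l : seq F, x = \sum_(y <- l) y ^+ 2.

Definition pythagoras_number : option nat :=
  ext_min (fun p => (1 <= p)%N /\
             forall x, sum_of_squares x -> sum_of_n_squares p x).

Definition qform := seq F.
Definition nondeg (q : qform) : Prop := forall a, a \in q -> a != 0.
Definition dim (q : qform) : nat := size q.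

Definition dmx (n : nat) (q : qform) : 'M[F]_n := diag_mx (\row_(i < n) q`_i).

Definition isometric (q q' : qform) : Prop :=
  size q = size q' /\
  exists P : 'M[F]_(size q), P \in unitmx /\
    P^T *m dmx (size q) q *m P = dmx (size q) q'.

Definition isotropic (q : qform) : Prop :=
  exists x : 'rV[F]_(size q), x != 0 /\
    \sum_(i < size q) q`_i * x 0 i ^+ 2 = 0.
Definition anisotropic (q : qform) : Prop := ~ isotropic q.

(* orthogonal sum is concatenation; m hyperbolic planes *)
Definition hyp (m : nat) : qform := flatten (nseq m [:: 1; -1]).
Definition witt_equiv (q q' : qform) : Prop :=
  exists m1 m2, isometric (q ++ hyp m1) (q' ++ hyp m2).

Definition nmul (n : nat) (q : qform) : qform := flatten (nseq n q).

Definition torsion (q : qform) : Prop :=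
  exists n, (0 < n)%N /\ witt_equiv (nmul n q) [::].

Definition tensor (q q' : qform) : qform := [seq a * b | a <- q, b <- q'].

(* I F = classes of even-dimensional forms; I^k F = finite sums of products
   of k elements of I F. *)
Definition in_Ik (k : nat) (q : qform) : Prop :=
  exists L : seq (seq qform),
    (forall l, l \in L -> size l = k /\
        forall r, r \in l -> nondeg r /\ ~~ odd (size r)) /\
    witt_equiv q (flatten [seq foldr tensor [:: 1] l | l <- L]).

(* I^k_t F = I^k F \cap W_t F = 0 *)
Definition Ikt_zero (k : nat) : Prop :=
  forall q, nondeg q -> in_Ik k q -> torsion q -> witt_equiv q [::].

Definition u_invariant : option nat :=
  ext_sup (fun d => exists q : qform,
             [/\ nondeg q, anisotropic q, torsion q & size q = d]).

End Forms.

Definition in_N (p u : option nat) : Prop :=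
  (p = Some 1%N /\ u = Some 0%N) \/
  (exists m n p', [/\ u = Some (2 * n)%N, p = Some p',
       (2 ^ m <= 2 * n)%N, (p' <= 2 ^ m)%N & (2 <= p')%N]) \/
  (u = None /\ (p = None \/ exists p', p = Some p' /\ (2 <= p')%N)).

From mathcomp Require Import all_boot all_algebra.
From mathcomp Require Import zify.
From Stdlib Require Import Classical ClassicalEpsilon.
Set Implicit Arguments. Unset Strict Implicit. Unset Printing Implicit Defensive.
Import GRing.Theory.
Local Open Scope ring_scope.

(* Pfister's matrix identity makes the nonzero sums of
   2^k squares a multiplicative group; hence for a sum of squares a the form
   2^k<1,-a> becomes hyperbolic after enough doubling (it is torsion), and it
   is anisotropic as soon as a is not a sum of 2^k squares.  Sylvester's law
   of inertia forces torsion forms to be even-dimensional, and a bound on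
   totally isotropic subspaces of q _|_ mH shows that no nonzero anisotropic
   form is Witt-equivalent to 0.  So a sum of squares that is not a sum of
   p - 1 squares, with 2^j <= p - 1 < 2^(j+1), yields an anisotropic torsion
   form of dimension 2^(j+1) >= p, while if every sum of squares is a square,
   multiples n x q of an anisotropic q stay anisotropic and u(F) = 0.  For
   the second claim, the same Pfister form is a k-fold Pfister form, so it
   lies in I^k_t F. *)

Section Ordering.
Variables (F : fieldType) (Pos : F -> Prop).
Hypothesis HP : is_ordering Pos.

Lemma posD x y : Pos x -> Pos y -> Pos (x + y).
Proof. by case: HP => h _ _ _; apply: h. Qed.

Lemma posM x y : Pos x -> Pos y -> Pos (x * y).
Proof. by case: HP => _ h _ _; apply: h. Qed.

Lemma pos_total x : Pos x \/ Pos (- x).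
Proof. by case: HP => _ _ h _; apply: h. Qed.

Lemma pos_antisym x : Pos x -> Pos (- x) -> x = 0.
Proof. by case: HP => _ _ _ h; apply: h. Qed.

Lemma pos0 : Pos 0.
Proof. by case: (pos_total 0); rewrite ?oppr0. Qed.

Lemma pos_sqr x : Pos (x ^+ 2).
Proof. by rewrite expr2; case: (pos_total x) => h; [|rewrite -mulrNN]; apply: posM. Qed.

Lemma pos_sum (I : Type) (r : seq I) (g : I -> F) :
  (forall i, Pos (g i)) -> Pos (\sum_(i <- r) g i).
Proof. by move=> gP; elim/big_rec: _ => [|i y _]; [apply: pos0 | apply: posD]. Qed.

Lemma pos_sum_eq0 (I : eqType) (r : seq I) (g : I -> F) :
  (forall i, Pos (g i)) -> \sum_(i <- r) g i = 0 -> forall i, i \in r -> g i = 0.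
Proof.
move=> gP; elim: r => [|a r IH] //; rewrite big_cons => sum0 i.
have rest0 : \sum_(j <- r) g j = 0.
  apply: pos_antisym; first exact: pos_sum.
  by move/eqP: sum0; rewrite addr_eq0 => /eqP <-.
rewrite in_cons => /orP [/eqP -> | ir]; last exact: IH.
by rewrite -sum0 rest0 addr0.
Qed.

Lemma sqr_sum_eq0 n (f : 'I_n -> F) : \sum_i f i ^+ 2 = 0 -> forall i, f i = 0.
Proof.
move=> sum0 i; apply/eqP; rewrite -sqrf_eq0; apply/eqP.
by apply: (pos_sum_eq0 (r := index_enum _) (g := fun i => f i ^+ 2)) => // j; apply: pos_sqr.
Qed.

Lemma not_pos_Nr1 : ~ Pos (-1).
Proof.
move=> N1; have /eqP : (1 : F) = 0.
  by apply: pos_antisym => //; rewrite -(expr1n _ 2); apply: pos_sqr.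
by rewrite oner_eq0.
Qed.

End Ordering.

(* [pow2 k.+1] unfolds to [pow2 k + pow2 k], so square matrices of that size
   split into blocks without casts. *)
Fixpoint pow2 k := if k is k'.+1 then (pow2 k' + pow2 k')%N else 1%N.

Lemma pow2E k : pow2 k = (2 ^ k)%N.
Proof. by elim: k => //= k ->; rewrite expnS mul2n addnn. Qed.

Lemma pow2_gt0 k : (0 < pow2 k)%N.
Proof. by rewrite pow2E expn_gt0. Qed.

Section PfisterIdentity.
Variables (F : fieldType) (Pos : F -> Prop).
Hypothesis HP : is_ordering Pos.

Lemma mulmx_tr_eq0 n (B : 'M[F]_n) : B *m B^T = 0 -> B = 0.
Proof.
move=> BBt0; apply/matrixP => i j; rewrite mxE.
apply: (sqr_sum_eq0 HP (f := B i)); transitivity ((B *m B^T) i i); last by rewrite BBt0 mxE.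
by rewrite mxE; apply: eq_bigr => k _; rewrite mxE expr2.
Qed.

Lemma mulmx_tr_scalarC n (B : 'M[F]_n) b : B *m B^T = b%:M -> B^T *m B = b%:M.
Proof.
have [->|b0] := eqVneq b 0 => BBt.
  by rewrite (mulmx_tr_eq0 (etrans BBt (raddf0 _))) trmx0 mulmx0 raddf0.
have : B *m (b^-1 *: B^T) = 1%:M by rewrite -scalemxAr BBt scale_scalar_mx mulVf.
move/mulmx1C; rewrite -scalemxAl => /(congr1 (fun M => b *: M)).
by rewrite scalerA mulfV // scale1r scale_scalar_mx mulr1.
Qed.

(* Doubling step: from A A^T = a and B B^T = b build
   [[A, B], [-a^-1 A B^T A, A]], whose Gram matrix is (a + b). *)
Lemma pfister_matrix k (x : 'rV[F]_(pow2 k)) :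
  exists M : 'M[F]_(pow2 k), M *m M^T = ((x *m x^T) 0 0)%:M.
Proof.
elim: k x => [|k IH] x /=; first by exists x; rewrite -mx11_scalar.
have [A AAt] := IH (lsubmx x); have [B BBt] := IH (rsubmx x).
set a := (lsubmx x *m _) 0 0 in AAt; set b := (rsubmx x *m _) 0 0 in BBt.
have -> : (x *m x^T) 0 0 = a + b by rewrite -{1 2}(hsubmxK x) tr_row_mx mul_row_col mxE.
have BtB := mulmx_tr_scalarC BBt.
have [a0|a0] := eqVneq a 0.
  exists (block_mx B 0 0 B); rewrite tr_block_mx !trmx0 mulmx_block.
  by rewrite !(mulmx0, mul0mx, addr0, add0r) BBt a0 add0r -scalar_mx_block.
set C := - (a^-1 *: (A *m B^T *m A)).
exists (block_mx A B C A); rewrite tr_block_mx mulmx_block AAt BBt.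
have CAt : C *m A^T + A *m B^T = 0.
  rewrite /C mulNmx -scalemxAl -(mulmxA _ A A^T) AAt mul_mx_scalar scalerA mulVf //.
  by rewrite scale1r addNr.
have ACt : A *m C^T + B *m A^T = 0.
  rewrite /C raddfN /= linearZ /= !trmx_mul trmxK mulmxN -scalemxAr mulmxA AAt.
  by rewrite mul_scalar_mx scalerA mulVf // scale1r addNr.
have CCt : C *m C^T = b%:M.
  rewrite /C mulNmx raddfN /= mulmxN opprK linearZ /= -scalemxAl -scalemxAr scalerA.
  have -> : A *m B^T *m A *m (A *m B^T *m A)^T = (a * (b * a))%:M.
    rewrite !trmx_mul trmxK -!mulmxA [A *m (A^T *m _)]mulmxA AAt mul_scalar_mx -!scalemxAr.
    rewrite [B^T *m (B *m A^T)]mulmxA BtB mul_scalar_mx -!scalemxAr AAt.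
    by rewrite !scale_scalar_mx.
  by rewrite scale_scalar_mx -mulrA mulKf // [b * a]mulrC mulKf.
by rewrite CAt ACt CCt -!raddfD /= [b + a]addrC -scalar_mx_block.
Qed.

End PfisterIdentity.

Section SumsOfSquares.
Variables (F : fieldType) (Pos : F -> Prop).
Hypothesis HP : is_ordering Pos.

Lemma sum_of_n_squares_row n (x : F) :
  sum_of_n_squares n x -> exists v : 'rV[F]_n, x = (v *m v^T) 0 0.
Proof.
case=> l [<- ->]; exists (\row_(i < size l) l`_i); rewrite mxE (big_nth 0) big_mkord.
by apply: eq_bigr => i _; rewrite !mxE expr2.
Qed.

Lemma row_sum_of_n_squares n (v : 'rV[F]_n) : sum_of_n_squares n ((v *m v^T) 0 0).
Proof.
exists [seq v 0 i | i <- enum 'I_n]; rewrite size_map size_enum_ord; split=> //.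
by rewrite big_map big_enum /= mxE; apply: eq_bigr => i _; rewrite !mxE expr2.
Qed.

Lemma sum_of_n_squares0 n : sum_of_n_squares n (0 : F).
Proof.
exists (nseq n 0); rewrite size_nseq big_nseq expr0n /=; split=> //.
by elim: n => //= n <-; rewrite add0r.
Qed.

Lemma not_sum_of_n_squares_neq0 n (x : F) : ~ sum_of_n_squares n x -> x != 0.
Proof. by apply: contra_notN => /eqP ->; apply: sum_of_n_squares0. Qed.

Lemma sum_of_n_squaresW n m (x : F) :
  (n <= m)%N -> sum_of_n_squares n x -> sum_of_n_squares m x.
Proof.
move=> le_nm [l [sz ->]]; subst n; have [l0 [sz0 sum0]] := sum_of_n_squares0 (m - size l).
by exists (l ++ l0); rewrite size_cat sz0 subnKC // big_cat /= -sum0 addr0.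
Qed.

Lemma sum_of_squares_n (x : F) : sum_of_squares x -> exists n, sum_of_n_squares n x.
Proof. by case=> l ->; exists (size l), l. Qed.

Lemma pos_sum_of_squares (x : F) : sum_of_squares x -> Pos x.
Proof. by case=> l ->; apply: (pos_sum HP) => y; apply: (pos_sqr HP). Qed.

Lemma sum_of_pow2_squaresM k (s t : F) :
  sum_of_n_squares (pow2 k) s -> sum_of_n_squares (pow2 k) t ->
  sum_of_n_squares (pow2 k) (s * t).
Proof.
move=> /sum_of_n_squares_row [x ->] /sum_of_n_squares_row [y ->].
have [M MMt] := pfister_matrix HP x.
suff -> : (x *m x^T) 0 0 * (y *m y^T) 0 0 = ((y *m M) *m (y *m M)^T) 0 0.
  exact: row_sum_of_n_squares.
by rewrite trmx_mul !mulmxA -(mulmxA y M) MMt mul_mx_scalar -scalemxAl [in RHS]mxE.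
Qed.

End SumsOfSquares.

Section Congruence.
Variable F : fieldType.

(* [isometric] without invertibility of the change of basis; invertibility is
   automatic when the target form is nondegenerate ([isometric_of_cong]). *)
Definition cong (q q' : seq F) := size q = size q' /\
  exists P : 'M[F]_(size q), P^T *m dmx (size q) q *m P = dmx (size q) q'.

Lemma dmxE n (q : seq F) i j : dmx n q i j = q`_i *+ (i == j).
Proof. by rewrite /dmx !mxE. Qed.

Lemma dmx_nseq n (c : F) : dmx n (nseq n c) = c%:M.
Proof. by apply/matrixP=> i j; rewrite dmxE !mxE nth_nseq ltn_ord. Qed.

Lemma dmx_cat n1 n2 (q1 q2 : seq F) : size q1 = n1 ->
  dmx (n1 + n2) (q1 ++ q2) = block_mx (dmx n1 q1) 0 0 (dmx n2 q2).
Proof.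
move=> sz1; rewrite -[dmx _ (q1 ++ q2)]submxK; congr block_mx;
  apply/matrixP=> i j; rewrite !mxE ?dmxE /= nth_cat sz1.
- by rewrite ltn_ord.
- rewrite ltn_ord; have /negbTE -> : lshift n2 i != rshift n1 j.
    by rewrite -val_eqE /= neq_ltn (leq_trans (ltn_ord i) (leq_addr _ _)).
  by rewrite mulr0n.
- rewrite ltnNge leq_addr /=; have /negbTE -> : rshift n1 i != lshift n2 j.
    by rewrite -val_eqE /= neq_ltn (leq_trans (ltn_ord j) (leq_addr _ _)) orbT.
  by rewrite mulr0n.
- by rewrite ltnNge leq_addr /= addKn -!val_eqE /= eqn_add2l.
Qed.

Lemma gram_mulmx m r n (X : 'M[F]_(m, r)) (Y : 'M[F]_(r, n)) (D : 'M[F]_n) :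
  (X *m Y) *m D *m (X *m Y)^T = X *m (Y *m D *m Y^T) *m X^T.
Proof. by rewrite trmx_mul !mulmxA. Qed.

Lemma dmx_congE n (q : seq F) (P : 'M[F]_n) i j :
  (P^T *m dmx n q *m P) i j = \sum_(k < n) q`_k * P k i * P k j.
Proof.
rewrite /dmx mul_mx_diag !mxE; apply: eq_bigr => k _; rewrite !mxE.
by rewrite [P k i * _]mulrC.
Qed.

Lemma cong_refl q : cong q q.
Proof. by split=> //; exists 1%:M; rewrite trmx1 mul1mx mulmx1. Qed.

Lemma cong_trans q1 q2 q3 : cong q1 q2 -> cong q2 q3 -> cong q1 q3.
Proof.
move=> [sz12 [P PE]] [sz23]; rewrite -sz12 => -[Q QE].
split; first by rewrite sz12.
by exists (P *m Q); rewrite trmx_mul !mulmxA -(mulmxA Q^T P^T) -(mulmxA Q^T) PE.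
Qed.

Lemma cong_cat q1 q1' q2 q2' :
  cong q1 q1' -> cong q2 q2' -> cong (q1 ++ q2) (q1' ++ q2').
Proof.
move=> [sz1 [P PE]] [sz2 [Q QE]]; split; first by rewrite !size_cat sz1 sz2.
rewrite size_cat; exists (block_mx P 0 0 Q).
rewrite !dmx_cat // -?sz1 // tr_block_mx !trmx0 !mulmx_block.
by rewrite !(mulmx0, mul0mx, addr0, add0r) PE QE.
Qed.

Lemma cong_perm q q' : perm_eq q' q -> cong q q'.
Proof.
move=> pqq'; have sz : size q = size q' by rewrite (perm_size pqq').
case/(perm_iotaP 0): pqq' => s s_perm q'E.
have s_lt (i : 'I_(size q)) : (nth 0%N s i < size q)%N.
  have : nth 0%N s i \in s by rewrite mem_nth // (perm_size s_perm) size_iota.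
  by rewrite (perm_mem s_perm) mem_iota.
have s_uniq : uniq s by rewrite (perm_uniq s_perm) iota_uniq.
have s_sz : size s = size q by rewrite (perm_size s_perm) size_iota.
split=> //; exists (\matrix_(k, i) ((k == Ordinal (s_lt i))%:R)).
apply/matrixP=> i j; rewrite dmx_congE dmxE.
rewrite (bigD1 (Ordinal (s_lt i))) //= big1 => [|k /negbTE ki]; last first.
  by rewrite !mxE ki !mulr0 mul0r.
rewrite !mxE eqxx addr0 mulr1 q'E (nth_map 0%N) ?s_sz // mulr_natr.
suff -> : (Ordinal (s_lt i) == Ordinal (s_lt j)) = (i == j) by [].
rewrite -val_eqE /=; apply/eqP/eqP => [sij|-> //].
by apply: val_inj; apply/eqP; rewrite -(nth_uniq 0%N _ _ s_uniq) /= ?sij ?s_sz.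
Qed.

Lemma isometric_of_cong q q' : cong q q' -> nondeg q' -> isometric q q'.
Proof.
move=> [sz [P PE]] nd; split=> //; exists P; split=> //.
rewrite unitmxE unitfE; apply: contraTneq isT => detP0.
have : \det (P^T *m dmx (size q) q *m P) != 0.
  rewrite PE /dmx det_diag; apply/prodf_neq0 => i _; rewrite mxE.
  by apply: nd; rewrite mem_nth // -sz.
by rewrite !det_mulmx detP0 mulr0 eqxx.
Qed.

End Congruence.

Section PfisterForms.
Variables (F : fieldType) (Pos : F -> Prop).
Hypothesis HP : is_ordering Pos.

Definition pfister_form N (a : F) : seq F := nseq N 1 ++ nseq N (- a).

Lemma sum_sqr_sum_of_n_squares n (f : 'I_n -> F) : sum_of_n_squares n (\sum_i f i ^+ 2).
Proof.
by exists [seq f i | i <- enum 'I_n]; rewrite size_map size_enum_ord big_map big_enum.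
Qed.

Lemma sum_of_pow2_squares_div k (s t : F) : t != 0 ->
  sum_of_n_squares (pow2 k) s -> sum_of_n_squares (pow2 k) t ->
  sum_of_n_squares (pow2 k) (s / t).
Proof.
move=> t0 sS sT; have [l [sz stE]] := sum_of_pow2_squaresM HP sS sT.
exists [seq y / t | y <- l]; rewrite size_map big_map; split=> //.
have -> : s / t = (s * t) * t^-1 ^+ 2 by rewrite expr2 mulrA mulfK.
rewrite stE mulr_suml.
by apply: eq_bigr => y _; rewrite exprMn.
Qed.

Lemma cong_nseqN k (a : F) : a != 0 -> sum_of_n_squares (pow2 k) a ->
  cong (nseq (pow2 k) (- a)) (nseq (pow2 k) (-1)).
Proof.
move=> a0 /sum_of_n_squares_row [x aE]; have [M MMt] := pfister_matrix HP x.
rewrite -aE in MMt; split; first by rewrite !size_nseq.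
rewrite size_nseq; exists (a^-1 *: M); rewrite !dmx_nseq.
rewrite linearZ /= linearZ /= -!scalemxAl mul_mx_scalar -scalemxAl (mulmx_tr_scalarC HP MMt).
by rewrite !scale_scalar_mx mulNr !mulrN mulKf // mulVf.
Qed.

Lemma count_nmul (p : pred F) c (q : seq F) : count p (nmul c q) = (c * count p q)%N.
Proof. by rewrite /nmul count_flatten map_nseq sumn_nseq mulnC. Qed.

Lemma size_nmul c (q : seq F) : size (nmul c q) = (c * size q)%N.
Proof. by rewrite -!count_predT count_nmul. Qed.

Lemma perm_nmul_pfister c N (a : F) :
  perm_eq (nmul c (pfister_form N a)) (pfister_form (c * N) a).
Proof.
apply/permP => p; rewrite count_nmul /pfister_form !count_cat !count_nseq.
by rewrite mulnDr !mulnA [(c * _)%N]mulnC [(c * p (- a))%N]mulnC.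
Qed.

Lemma perm_hyp m : perm_eq (hyp F m) (nseq m 1 ++ nseq m (-1)).
Proof.
apply/permP => p; rewrite /hyp count_flatten map_nseq sumn_nseq count_cat !count_nseq /=.
by rewrite addn0 mulnDl.
Qed.

Lemma size_hyp m : size (hyp F m) = (m + m)%N.
Proof. by rewrite (perm_size (perm_hyp m)) size_cat !size_nseq. Qed.

Lemma nondeg_nseq1N m (a : F) : a != 0 -> nondeg (nseq m 1 ++ nseq m (- a)).
Proof.
move=> a0 x; rewrite mem_cat => /orP [] /nseqP [-> _]; first exact: oner_neq0.
by rewrite oppr_eq0.
Qed.

Lemma nondeg_hyp m : nondeg (hyp F m).
Proof.
by move=> x; rewrite (perm_mem (perm_hyp m)); apply: nondeg_nseq1N; rewrite oner_neq0.
Qed.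

Lemma nondeg_pfister N (a : F) : a != 0 -> nondeg (pfister_form N a).
Proof. exact: nondeg_nseq1N. Qed.

Lemma size_pfister N (a : F) : size (pfister_form N a) = (N + N)%N.
Proof. by rewrite size_cat !size_nseq. Qed.

(* 2^L x 2^j<1,-a> = 2^(L+j)<1,-a>, and once a is a sum of 2^(L+j) squares the
   second half is congruent to 2^(L+j)<-1>. *)
Lemma torsion_pfister j (a : F) : a != 0 -> sum_of_squares a ->
  torsion (pfister_form (pow2 j) a).
Proof.
move=> a0 /sum_of_squares_n [L aL]; exists (pow2 L); split; first exact: pow2_gt0.
have LjE : (pow2 L * pow2 j)%N = pow2 (L + j) by rewrite !pow2E expnD.
have aLj : sum_of_n_squares (pow2 (L + j)) a.
  apply: sum_of_n_squaresW aL; rewrite pow2E (leq_trans (ltnW (ltn_expl _ (leqnn 2)))) //.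
  by rewrite leq_exp2l // leq_addr.
exists 0%N, (pow2 (L + j)); rewrite /= cats0.
apply: isometric_of_cong; last exact: nondeg_hyp.
apply: (cong_trans (q2 := pfister_form (pow2 (L + j)) a)).
  by apply: cong_perm; rewrite -LjE perm_sym perm_nmul_pfister.
apply: (cong_trans (cong_cat (cong_refl _) (cong_nseqN a0 aLj))).
by apply: cong_perm; apply: perm_hyp.
Qed.

Lemma anisotropic_pfister j (a : F) : ~ sum_of_n_squares (pow2 j) a ->
  anisotropic (pfister_form (pow2 j) a).
Proof.
move=> aNsq [x [x0]]; move: x x0; rewrite size_pfister => x x0.
rewrite big_split_ord /=.
set s := \sum_(i < pow2 j) _; set t := \sum_(i < pow2 j) _.
set S := \sum_(i < pow2 j) x 0 (lshift (pow2 j) i) ^+ 2.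
set T := \sum_(i < pow2 j) x 0 (rshift (pow2 j) i) ^+ 2.
have -> : s = S.
  by apply: eq_bigr => i _; rewrite nth_cat size_nseq /= ltn_ord nth_nseq ltn_ord mul1r.
have -> : t = - a * T.
  rewrite mulr_sumr; apply: eq_bigr => i _.
  by rewrite nth_cat size_nseq /= ltnNge leq_addr /= addKn nth_nseq ltn_ord.
move/eqP; rewrite mulNr subr_eq0 => /eqP SE.
have [T0|T0] := eqVneq T 0.
  move: SE; rewrite T0 mulr0 => S0; apply/negP: x0; rewrite negbK.
  apply/eqP/matrixP => i k; rewrite [i]ord1 mxE.
  by case: (split_ordP k) => l ->; [apply: (sqr_sum_eq0 HP S0) | apply: (sqr_sum_eq0 HP T0)].
apply: aNsq; rewrite -(mulfK T0 a) -SE.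
by apply: (sum_of_pow2_squares_div T0); apply: sum_sqr_sum_of_n_squares.
Qed.

Lemma foldr_tensor_nseq11 j :
  foldr (@tensor F) [:: 1] (nseq j [:: 1; 1]) = nseq (pow2 j) 1.
Proof. by elim: j => //= j ->; rewrite /tensor /= map_nseq mul1r cats0 -nseqD. Qed.

(* pfister_form (2^j) a is the (j+1)-fold Pfister form <<1, ..., 1, a>>. *)
Lemma pfister_in_Ik j (a : F) : a != 0 -> in_Ik j.+1 (pfister_form (pow2 j) a).
Proof.
move=> a0; exists [:: [:: [:: 1; - a] & nseq j [:: 1; 1]]]; split.
  move=> l; rewrite inE => /eqP ->; split; first by rewrite /= size_nseq.
  move=> r; rewrite inE => /orP [/eqP ->|/nseqP [-> _]]; split=> //.
    exact: (nondeg_nseq1N (m := 1) a0).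
  by move=> y; rewrite !inE orbb => /eqP ->; apply: oner_neq0.
exists 0%N, 0%N; rewrite /= foldr_tensor_nseq11 /tensor /= !map_nseq mul1r mulr1 !cats0.
by split=> //; exists 1%:M; rewrite unitmx1 trmx1 mul1mx mulmx1.
Qed.

End PfisterForms.

Section TotallyIsotropic.
Variables (F : fieldType) (s m : nat) (Dq : 'M[F]_s).
Hypothesis Dq_aniso : forall x : 'rV[F]_s, x *m Dq *m x^T = 0 -> x = 0.

Local Notation n := (s + (m + m))%N.

Definition hyp_gram : 'M[F]_n := block_mx Dq 0 0 (block_mx 1%:M 0 0 (- 1%:M)).

Local Notation xpart A := (lsubmx A).
Local Notation ypart A := (lsubmx (rsubmx A)).
Local Notation zpart A := (rsubmx (rsubmx A)).

Lemma hyp_gram_bilinear r1 r2 (A : 'M[F]_(r1, n)) (B : 'M[F]_(r2, n)) :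
  A *m hyp_gram *m B^T = xpart A *m Dq *m (xpart B)^T
    + ypart A *m (ypart B)^T - zpart A *m (zpart B)^T.
Proof.
rewrite -{1}(hsubmxK A) -{1}(hsubmxK (rsubmx A)) -{1}(hsubmxK B) -{1}(hsubmxK (rsubmx B)).
rewrite /hyp_gram !tr_row_mx (mul_row_block (lsubmx A)) !mulmx0 !addr0 add0r.
rewrite (mul_row_block (ypart A)) !mulmx0 !addr0 add0r mulmx1 mulmxN mulmx1.
by rewrite (mul_row_col (lsubmx A *m Dq)) (mul_row_col (ypart A)) mulNmx addrA.
Qed.

Definition ysubz : 'M[F]_(n, m) := col_mx 0 (col_mx 1%:M (- 1%:M)).

Lemma mul_ysubz r (A : 'M[F]_(r, n)) : A *m ysubz = ypart A - zpart A.
Proof.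
rewrite -{1}(hsubmxK A) -{1}(hsubmxK (rsubmx A)) /ysubz.
by rewrite !mul_row_col mulmx0 add0r mulmx1 mulmxN mulmx1.
Qed.

(* Let U be the row space of W.  Its vectors of the form (x, y, y) have
   q(x) = 0, so they are (0, y, y), and such a vector is orthogonal to U
   exactly when y is orthogonal to the image of U under (x, y, z) |-> y - z.
   Hence the dimensions of that image and of its kernel add up to at most m. *)
Lemma totally_isotropic_rank r (W : 'M[F]_(r, n)) :
  W *m hyp_gram *m W^T = 0 -> row_free W -> (r <= m)%N.
Proof.
move=> W_iso W_free; set G := W *m ysubz; set V := kermx G *m W.
have VG0 : V *m ysubz = 0 by rewrite /V -mulmxA mulmx_ker.
have zV : zpart V = ypart V by apply/eqP; rewrite eq_sym -subr_eq0 -mul_ysubz VG0.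
have V_orth : V *m hyp_gram *m W^T = 0.
  by rewrite /V -(mulmxA _ W) -(mulmxA _ (W *m _)) W_iso mulmx0.
have xV : xpart V = 0.
  have : V *m hyp_gram *m V^T = 0 by rewrite /V trmx_mul mulmxA V_orth mul0mx.
  rewrite hyp_gram_bilinear zV addrK => V_iso.
  apply/row_matrixP => i; rewrite row0 rowE; apply: Dq_aniso.
  by rewrite gram_mulmx V_iso mulmx0 mul0mx.
have VE : V = ypart V *m row_mx 0 (row_mx 1%:M 1%:M).
  by rewrite !mul_mx_row mulmx0 mulmx1 -xV -{2}zV !hsubmxK.
have yV_orth : ypart V *m G^T = 0.
  move: V_orth; rewrite hyp_gram_bilinear xV !mul0mx add0r zV -mulmxBr => <-.
  by rewrite /G mul_ysubz linearB.
have rank_yV : \rank (ypart V) = (r - \rank G)%N.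
  apply/eqP; rewrite -mxrank_ker -(mxrankMfree _ W_free) -/V eqn_leq; apply/andP; split.
    by rewrite -[V in ypart V]mulmx1 -mulmx_rsub -mulmx_lsub mxrankM_maxl.
  by rewrite {1}VE mxrankM_maxl.
have := mulmx0_rank_max yV_orth; rewrite rank_yV mxrank_tr subnK //.
exact: rank_leq_row.
Qed.

End TotallyIsotropic.

Section WittZero.
Variable F : fieldType.

Lemma dmx_nseq1N m :
  dmx (m + m) (nseq m 1 ++ nseq m (-1)) = block_mx 1%:M 0 0 (- 1%:M) :> 'M[F]_(m + m).
Proof. by rewrite dmx_cat ?size_nseq // !dmx_nseq raddfN. Qed.

Lemma hyp_totally_isotropic m n : n = (m + m)%N -> exists U : 'M[F]_(m, n),
  U *m dmx n (nseq m 1 ++ nseq m (-1)) *m U^T = 0 /\ row_free U.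
Proof.
move->; exists (row_mx 1%:M 1%:M); split.
  rewrite dmx_nseq1N tr_row_mx trmx1 (mul_row_block 1%:M) !mulmx0 !mul1mx addr0 add0r.
  by rewrite (mul_row_col 1%:M) !mulmx1 addrN.
apply/row_freeP; exists (col_mx 1%:M 0).
by rewrite (mul_row_col 1%:M) mulmx0 addr0 mulmx1.
Qed.

Lemma anisotropic_rowP (q : seq F) : anisotropic q ->
  forall x : 'rV[F]_(size q), x *m dmx (size q) q *m x^T = 0 -> x = 0.
Proof.
move=> q_aniso x qx0; have [//|x0] := eqVneq x 0; case: q_aniso; exists x; split=> //.
transitivity ((x *m dmx _ q *m x^T) 0 0); last by rewrite qx0 mxE.
rewrite !mxE; apply: eq_bigr => i _; rewrite !mxE (bigD1 i) //= big1 => [|k /negbTE ki].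
  by rewrite dmxE eqxx mulr1n addr0 expr2 mulrCA mulrA.
by rewrite dmxE ki mulr0n mulr0.
Qed.

(* The diagonal of m2 H is a totally isotropic subspace of dimension m2;
   pulled back along the isometry it gives m2 <= m1, and comparing dimensions
   forces q = 0. *)
Lemma anisotropic_witt_zero (q : seq F) m1 m2 : anisotropic q ->
  isometric (q ++ hyp F m1) (hyp F m2) -> size q = 0%N.
Proof.
move=> q_aniso [sz [P [_ PE]]].
have split_iso : isometric (q ++ (nseq m1 1 ++ nseq m1 (-1))) (nseq m2 1 ++ nseq m2 (-1)).
  apply: isometric_of_cong; last by apply: nondeg_nseq1N; rewrite oner_neq0.
  apply: (cong_trans (q2 := q ++ hyp F m1)).
    by apply: cong_cat (cong_refl _) (cong_perm _); apply: perm_hyp.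
  apply: (cong_trans (q2 := hyp F m2)); first by split; last exists P.
  by apply: cong_perm; rewrite perm_sym perm_hyp.
case: split_iso; rewrite !size_cat !size_nseq => szE [Q [Q_unit QE]].
have [U [U_iso U_free]] := hyp_totally_isotropic szE.
rewrite dmx_cat // dmx_nseq1N -/(hyp_gram m1 (dmx (size q) q)) in QE.
have : (m2 <= m1)%N.
  apply: (totally_isotropic_rank (anisotropic_rowP q_aniso) (W := U *m Q^T)).
    by rewrite trmx_mul trmxK !mulmxA -(mulmxA U) -(mulmxA U) QE.
  by rewrite /row_free mxrankMfree ?row_free_unit ?unitmx_tr.
by move: szE; lia.
Qed.

End WittZero.

Section Sylvester.
Variables (F : fieldType) (Pos : F -> Prop).
Hypothesis HP : is_ordering Pos.

Definition posb (x : F) : bool :=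
  if excluded_middle_informative (Pos x /\ x <> 0) then true else false.

Lemma posbP x : reflect (Pos x /\ x <> 0) (posb x).
Proof. by rewrite /posb; case: excluded_middle_informative => h; constructor. Qed.

Lemma diag_form r (w c : 'rV[F]_r) :
  (c *m diag_mx w *m c^T) 0 0 = \sum_t w 0 t * c 0 t ^+ 2.
Proof.
rewrite mul_mx_diag !mxE; apply: eq_bigr => t _; rewrite !mxE.
by rewrite mulrC mulrA expr2 mulrC !mulrA.
Qed.

Lemma diag_form_posb r (w c : 'rV[F]_r) : (forall t, posb (w 0 t)) -> c != 0 ->
  posb ((c *m diag_mx w *m c^T) 0 0).
Proof.
move=> w_pos c0; have wP t : Pos (w 0 t * c 0 t ^+ 2).
  by apply: (posM HP); [case/posbP: (w_pos t) | apply: (pos_sqr HP)].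
rewrite diag_form; apply/posbP; split; first exact: (pos_sum HP).
move=> sum0; move/eqP: c0; apply; apply/matrixP => i t; rewrite [i]ord1 mxE.
have /eqP := pos_sum_eq0 HP (r := index_enum _) wP sum0 (mem_index_enum t).
rewrite mulf_eq0 sqrf_eq0 => /orP [/eqP w0|/eqP //].
by case/posbP: (w_pos t).
Qed.

Lemma diag_form_npos r (w c : 'rV[F]_r) : (forall t, Pos (- w 0 t)) ->
  Pos (- (c *m diag_mx w *m c^T) 0 0).
Proof.
move=> w_npos; rewrite diag_form -sumrN; apply: (pos_sum HP) => t.
by rewrite -mulNr; apply: (posM HP) => //; apply: (pos_sqr HP).
Qed.

(* A subspace on which the form is positive definite meets a subspace on which
   it is negative semidefinite trivially. *)
Lemma pos_npos_rank n r t (S : 'M[F]_(r, n)) (T : 'M[F]_(t, n)) (D : 'M[F]_n) :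
  (forall c : 'rV_r, c != 0 -> posb (((c *m S) *m D *m (c *m S)^T) 0 0)) ->
  (forall g : 'rV_t, Pos (- ((g *m T) *m D *m (g *m T)^T) 0 0)) ->
  (\rank S + \rank T <= n)%N.
Proof.
move=> S_pos T_npos; rewrite -mxrank_sum_cap.
suff -> : \rank (S :&: T)%MS = 0%N by rewrite addn0 rank_leq_col.
apply/eqP; rewrite mxrank_eq0; apply/eqP/row_matrixP => i; rewrite row0.
set v := row i _; apply/eqP; apply: contraT => v0.
have /submxP [c vS] : (v <= S)%MS by apply: submx_trans (row_sub _ _) (capmxSl _ _).
have /submxP [g vT] : (v <= T)%MS by apply: submx_trans (row_sub _ _) (capmxSr _ _).
have c0 : c != 0 by apply: contraNneq v0 => c0; rewrite vS c0 mul0mx.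
have /posbP [vD_pos []] := S_pos c c0; apply: (pos_antisym HP vD_pos).
by rewrite -vS vT; apply: T_npos.
Qed.

Definition select_rows n r (f : 'I_r -> 'I_n) : 'M[F]_(r, n) :=
  \matrix_(t, k) ((f t == k)%:R).

Lemma select_rows_dmx n r (f : 'I_r -> 'I_n) (d : seq F) : injective f ->
  select_rows f *m dmx n d *m (select_rows f)^T = diag_mx (\row_t d`_(f t)).
Proof.
move=> f_inj; apply/matrixP => t t'; rewrite /dmx mul_mx_diag !mxE.
rewrite (bigD1 (f t)) //= big1 => [|k /negbTE kn]; last by rewrite !mxE eq_sym kn !mul0r.
rewrite !mxE eqxx mul1r addr0 (inj_eq f_inj) eq_sym.
by case: (t == t'); rewrite ?mulr1 ?mulr0.
Qed.

Lemma row_free_select_rows n r (f : 'I_r -> 'I_n) : injective f ->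
  row_free (select_rows f).
Proof.
move=> f_inj; apply/row_freeP; exists (select_rows f)^T.
have := select_rows_dmx (nseq n 1) f_inj; rewrite dmx_nseq mulmx1 => ->.
by apply/matrixP => i j; rewrite !mxE nth_nseq ltn_ord.
Qed.

Lemma card_nth_count n (d : seq F) (p : pred F) : size d = n ->
  #|[set i : 'I_n | p d`_i]| = count p d.
Proof.
move=> <-; rewrite -sum1_card -sum1_count (big_nth 0) big_mkord.
by apply: eq_bigl => i; rewrite inE.
Qed.

(* The positive coordinates of d' and the nonpositive coordinates of d span
   subspaces on which the form is positive definite, resp. negative
   semidefinite. *)
Lemma count_posb_congr n (d d' : seq F) (P : 'M[F]_n) : P \in unitmx ->
  P^T *m dmx n d *m P = dmx n d' -> size d = n -> size d' = n ->
  (count posb d' <= count posb d)%N.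
Proof.
move=> P_unit PE szd szd'.
set Ip := [set i : 'I_n | posb d'`_i]; set In := [set i : 'I_n | ~~ posb d`_i].
have cardIp : #|Ip| = count posb d' by rewrite card_nth_count.
have cardIn : #|In| = (n - count posb d)%N.
  by rewrite (card_nth_count (predC posb) szd) -szd -(count_predC posb d) addKn.
set Sp := select_rows (@enum_val _ (mem Ip)); set Sn := select_rows (@enum_val _ (mem In)).
have Sp_pos (c : 'rV_#|Ip|) : c != 0 ->
    posb (((c *m (Sp *m P^T)) *m dmx n d *m (c *m (Sp *m P^T))^T) 0 0).
  move=> c0; rewrite mulmxA gram_mulmx trmxK PE gram_mulmx.
  rewrite select_rows_dmx; last exact: enum_val_inj.
  by apply: diag_form_posb => // i; rewrite mxE; have := enum_valP i; rewrite inE.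
have Sn_npos (g : 'rV_#|In|) : Pos (- ((g *m Sn) *m dmx n d *m (g *m Sn)^T) 0 0).
  rewrite gram_mulmx select_rows_dmx; last exact: enum_val_inj.
  apply: diag_form_npos => i; rewrite mxE; have := enum_valP i; rewrite inE => /posbP dNpos.
  have [d_pos|//] := pos_total HP (d`_(enum_val i)).
  have [->|d0] := eqVneq (d`_(enum_val i)) 0; first by rewrite oppr0; apply: (pos0 HP).
  by case: dNpos; split=> //; apply/eqP.
have := pos_npos_rank Sp_pos Sn_npos.
rewrite mxrankMfree ?row_free_unit ?unitmx_tr //.
have /eqP -> := row_free_select_rows (@enum_val_inj _ (mem Ip)).
have /eqP -> := row_free_select_rows (@enum_val_inj _ (mem In)).
by rewrite cardIp cardIn; have := count_size posb d; rewrite szd; lia.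
Qed.

End Sylvester.

Section TorsionEven.
Variables (F : fieldType) (Pos : F -> Prop).
Hypothesis HP : is_ordering Pos.

Lemma isometric_count_posb (q q' : seq F) :
  isometric q q' -> count (posb Pos) q = count (posb Pos) q'.
Proof.
move=> [sz [P [P_unit PE]]]; apply/eqP; rewrite eqn_leq; apply/andP; split.
  apply: (count_posb_congr HP (P := invmx P)); rewrite ?unitmx_inv -?sz //.
  rewrite trmx_inv -PE !mulmxA mulVmx ?unitmx_tr // mul1mx -mulmxA mulmxV //.
  by rewrite mulmx1.
exact: (count_posb_congr HP P_unit PE).
Qed.

Lemma count_posb_hyp m : count (posb Pos) (hyp F m) = m.
Proof.
have posb1 : posb Pos 1.
  by apply/posbP; split; [rewrite -(expr1n _ 2); apply: (pos_sqr HP) | apply/eqP; apply: oner_neq0].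
have posbN1 : posb Pos (-1) = false by apply/posbP => -[/(not_pos_Nr1 HP)].
rewrite (permP (perm_hyp F m)) count_cat !count_nseq posb1 posbN1.
by rewrite mul1n mul0n addn0.
Qed.

(* Signatures: n x q _|_ m1 H and m2 H have n * #pos(q) + m1 and m2 positive
   entries, out of n * dim q + 2 m1 and 2 m2. *)
Lemma torsion_size_even (q : seq F) : torsion q -> ~~ odd (size q).
Proof.
move=> [n [n_gt0 [m1 [m2 qmH]]]].
have := isometric_count_posb qmH; have [szE _] := qmH.
move: szE; rewrite /= count_cat count_nmul !count_posb_hyp size_cat size_nmul !size_hyp.
set c := count _ q => szE cE.
suff -> : size q = (c + c)%N by rewrite addnn odd_double.
by apply/eqP; rewrite -(eqn_pmul2l n_gt0); apply/eqP; lia.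
Qed.

End TorsionEven.

Section SquaresAnisotropic.
Variables (F : fieldType) (Pos : F -> Prop).
Hypothesis HP : is_ordering Pos.

Definition form_value (q : seq F) (x : nat -> F) := \sum_(i < size q) q`_i * x i ^+ 2.

Lemma isotropic_form_value (q : seq F) : isotropic q <->
  exists2 x : nat -> F, (exists2 i, (i < size q)%N & x i != 0) & form_value q x = 0.
Proof.
split=> [[xr [/rV0Pn [j xrj0] qxr0]]|[x [i iq xi0] qx0]].
  exists (fun i => if insub i is Some o then xr 0 o else 0).
    by exists (val j); rewrite ?valK ?ltn_ord.
  by rewrite -[RHS]qxr0; apply: eq_bigr => i _; rewrite valK.
exists (\row_(j < size q) x j); split; first by apply/rV0Pn; exists (Ordinal iq); rewrite mxE.
by rewrite -[RHS]qx0; apply: eq_bigr => j _; rewrite mxE.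
Qed.

Lemma form_value_cat (q r : seq F) x :
  form_value (q ++ r) x = form_value q x + form_value r (fun i => x (size q + i)%N).
Proof.
rewrite /form_value size_cat big_split_ord /=; congr (_ + _); apply: eq_bigr => i _.
  by rewrite nth_cat ltn_ord.
by rewrite nth_cat ltnNge leq_addr /= addKn.
Qed.

(* The value of n x q collects, for each coefficient q_j, the sum of the
   squares of the n coordinates attached to it. *)
Lemma nmul_form_value (q : seq F) n (x : nat -> F) : exists w : nat -> F,
  [/\ forall j, sum_of_squares (w j),
      form_value (nmul n q) x = \sum_(j < size q) q`_j * w j &
      (forall j, (j < size q)%N -> w j = 0) -> forall i, (i < n * size q)%N -> x i = 0].
Proof.
elim: n x => [|n IH] x.
  exists (fun _ => 0); split=> //; first by move=> j; exists [::]; rewrite big_nil.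
  by rewrite /form_value /nmul /= big_ord0 big1 // => j _; rewrite mulr0.
have [w [w_sq qxE w0x0]] := IH (fun i => x (size q + i)%N).
exists (fun j => x j ^+ 2 + w j); split.
- by move=> j; case: (w_sq j) => l ->; exists (x j :: l); rewrite big_cons.
- rewrite /nmul /= form_value_cat -/(nmul n q) qxE /form_value -big_split /=.
  by apply: eq_bigr => j _; rewrite mulrDr.
- move=> w'0 i; have xw0 j : (j < size q)%N -> x j = 0 /\ w j = 0.
    move=> jq; have sum0 := w'0 j jq.
    have xj0 : x j ^+ 2 = 0.
      apply: (pos_antisym HP (pos_sqr HP _)); move/eqP: (sum0); rewrite addr_eq0 => /eqP ->.
      by rewrite opprK; apply: (pos_sum_of_squares HP).
    by split; [apply/eqP; rewrite -sqrf_eq0 xj0 | rewrite xj0 add0r in sum0].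
  case: (ltnP i (size q)) => [iq _|iq lt]; first by case: (xw0 i iq).
  rewrite -(subnKC iq); apply: w0x0 => [j jq|]; first by case: (xw0 j jq).
  by rewrite ltn_subLR // -mulSn.
Qed.

Lemma anisotropic_nmul (q : seq F) n :
  (forall x : F, sum_of_squares x -> sum_of_n_squares 1 x) ->
  anisotropic q -> anisotropic (nmul n q).
Proof.
move=> sq1 q_aniso /isotropic_form_value [x [i ilt xi0] qx0].
have [w [w_sq qxE w0x0]] := nmul_form_value q n x.
have w_sqr j : exists y, w j == y ^+ 2.
  have [l [sz1 ->]] := sq1 _ (w_sq j).
  by case: l sz1 => [|y [|]] //= _; exists y; rewrite big_seq1.
pose y j := xchoose (w_sqr j); have wE j : w j = y j ^+ 2 := eqP (xchooseP (w_sqr j)).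
apply: q_aniso; apply/isotropic_form_value; exists y; last first.
  by rewrite -qx0 qxE; apply: eq_bigr => j _; rewrite wE.
apply: NNPP => y0; move/negP: xi0; apply; apply/eqP.
apply: w0x0 => [j jq|]; last by rewrite -size_nmul.
by rewrite wE; apply/eqP; rewrite sqrf_eq0; apply: contraT => yj; case: y0; exists j.
Qed.

End SquaresAnisotropic.

Lemma classical_ex_min (P : nat -> Prop) n :
  P n -> exists k, P k /\ forall m, P m -> (k <= m)%N.
Proof.
elim/ltn_ind: n => n IH Pn.
have [[k kn Pk]|no_less] := classic (exists2 k, (k < n)%N & P k); first exact: IH kn Pk.
by exists n; split=> // m Pm; rewrite leqNgt; apply/negP => mn; apply: no_less; exists m.
Qed.

Lemma ext_min_Some (P : nat -> Prop) k :
  ext_min P = Some k -> P k /\ forall m, P m -> (k <= m)%N.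
Proof.
rewrite /ext_min; case: excluded_middle_informative => // ex [<-].
by case: constructive_indefinite_description.
Qed.

Lemma ext_minE (P : nat -> Prop) k :
  P k -> (forall m, P m -> (k <= m)%N) -> ext_min P = Some k.
Proof.
move=> Pk kmin; rewrite /ext_min; case: excluded_middle_informative => [ex|]; last first.
  by case; exists k.
case: constructive_indefinite_description => k' /= [Pk' k'min].
by congr Some; apply/eqP; rewrite eqn_leq k'min // kmin.
Qed.

Lemma ext_min_None (P : nat -> Prop) : ext_min P = None -> forall n, ~ P n.
Proof.
move=> none n Pn; have [k [Pk kmin]] := classical_ex_min Pn.
by rewrite (ext_minE Pk kmin) in none.
Qed.

Section Invariants.
Variables (F : fieldType) (Pos : F -> Prop).
Hypothesis HP : is_ordering Pos.

Definition pythagoras_bound (p : nat) :=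
  (1 <= p)%N /\ forall x : F, sum_of_squares x -> sum_of_n_squares p x.

Definition anisotropic_torsion_dim (d : nat) :=
  exists q : seq F, [/\ nondeg q, anisotropic q, torsion q & size q = d].

Lemma not_pythagoras_bound m : (1 <= m)%N -> ~ pythagoras_bound m ->
  exists x : F, sum_of_squares x /\ ~ sum_of_n_squares m x.
Proof.
move=> m_gt0 not_bound; apply: NNPP => all_sq; apply: not_bound; split=> // x x_sq.
by apply: NNPP => x_nsq; apply: all_sq; exists x.
Qed.

Lemma anisotropic_torsion_dim0 : anisotropic_torsion_dim 0.
Proof.
exists [::]; split=> //; first by case=> x; rewrite (thinmx0 x) eqxx; case.
exists 1%N; split=> //; exists 0%N, 0%N; split=> //=; exists 1%:M.
by rewrite unitmx1 trmx1 mul1mx mulmx1.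
Qed.

Lemma anisotropic_torsion_dim_pfister j (x : F) : sum_of_squares x ->
  ~ sum_of_n_squares (pow2 j) x -> anisotropic_torsion_dim (pow2 j + pow2 j).
Proof.
move=> x_sq x_nsq; have x0 := not_sum_of_n_squares_neq0 x_nsq.
exists (pfister_form (pow2 j) x); split.
- exact: nondeg_pfister.
- exact: (anisotropic_pfister HP x_nsq).
- exact: (torsion_pfister HP j x0 x_sq).
- exact: size_pfister.
Qed.

Lemma anisotropic_torsion_dim_even d : anisotropic_torsion_dim d -> ~~ odd d.
Proof. by case=> q [_ _ q_tor <-]; apply: (torsion_size_even HP q_tor). Qed.

Lemma anisotropic_torsion_dim_pyth1 d :
  pythagoras_bound 1 -> anisotropic_torsion_dim d -> d = 0%N.
Proof.
move=> [_ sq1] [q [_ q_aniso [n [n_gt0 [m1 [m2 nq_hyp]]]]] <-].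
have := anisotropic_witt_zero (anisotropic_nmul HP (n := n) sq1 q_aniso) nq_hyp.
by rewrite size_nmul => /eqP; rewrite muln_eq0 (negbTE (lt0n_neq0 n_gt0)) => /eqP.
Qed.

(* A least upper bound d > 0 lies in the set, since otherwise d - 1 would be
   a smaller upper bound; d = 0 is realized by the empty form. *)
Lemma anisotropic_torsion_dim_sup d :
  (forall n, anisotropic_torsion_dim n -> (n <= d)%N) ->
  (forall m, (forall n, anisotropic_torsion_dim n -> (n <= m)%N) -> (d <= m)%N) ->
  anisotropic_torsion_dim d.
Proof.
case: d => [|d] d_ub d_least; first exact: anisotropic_torsion_dim0.
apply: NNPP => not_d; suff : (d.+1 <= d)%N by rewrite ltnn.
apply: d_least => n n_dim; rewrite -ltnS ltn_neqAle d_ub // andbT.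
by apply/eqP => nd; apply: not_d; rewrite -nd.
Qed.

Lemma u_invariant_pyth1 :
  pythagoras_number F = Some 1%N -> u_invariant F = Some 0%N.
Proof.
move=> /ext_min_Some [sq1 _]; apply: ext_minE => // n n_dim.
by rewrite (anisotropic_torsion_dim_pyth1 sq1 n_dim).
Qed.

(* With 2^m <= p - 1 < 2^(m+1), some sum of squares is not a sum of p - 1,
   hence not of 2^m, squares: its Pfister form has dimension 2^(m+1) >= p. *)
Lemma u_invariant_pyth p d : pythagoras_number F = Some p -> (2 <= p)%N ->
  u_invariant F = Some d -> exists m, [/\ ~~ odd d, (2 ^ m <= d)%N & (p <= 2 ^ m)%N].
Proof.
move=> /ext_min_Some [_ p_min] p_ge2 /ext_min_Some [d_ub d_least].
have p1_gt0 : (0 < p.-1)%N by rewrite -ltnS prednK // ltnW.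
set j := trunc_log 2 p.-1.
have not_bound : ~ pythagoras_bound p.-1 by move=> /p_min; rewrite -ltnS prednK ?ltnn // ltnW.
have [x [x_sq x_nsq]] := not_pythagoras_bound p1_gt0 not_bound.
have x_nsqj : ~ sum_of_n_squares (pow2 j) x.
  by move=> xj; apply: x_nsq; apply: sum_of_n_squaresW xj; rewrite pow2E trunc_logP.
exists j.+1; split.
- exact: anisotropic_torsion_dim_even (anisotropic_torsion_dim_sup d_ub d_least).
- rewrite expnS mul2n -addnn -pow2E; apply: d_ub.
  exact: anisotropic_torsion_dim_pfister x_sq x_nsqj.
- by rewrite -(prednK (ltnW p_ge2)) trunc_log_ltn.
Qed.

Lemma u_invariant_pyth_inf : pythagoras_number F = None -> u_invariant F = None.
Proof.
move=> no_p; case u_def: (u_invariant F) => [d|] //; have [d_ub _] := ext_min_Some u_def.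
have [x [x_sq x_nsq]] := not_pythagoras_bound (pow2_gt0 d) (ext_min_None no_p (n := pow2 d)).
have := d_ub _ (anisotropic_torsion_dim_pfister x_sq x_nsq).
by rewrite pow2E; have := ltn_expl d (leqnn 2); lia.
Qed.

Lemma pythagoras_u_in_N : in_N (pythagoras_number F) (u_invariant F).
Proof.
case p_def: (pythagoras_number F) => [p|]; last first.
  by right; right; split; [apply: u_invariant_pyth_inf | left].
have [[p_gt0 _] _] := ext_min_Some p_def.
have [p1|p_neq1] := eqVneq p 1%N.
  by left; split; [rewrite p1 | apply: u_invariant_pyth1; rewrite -p1].
have p_ge2 : (2 <= p)%N by rewrite ltn_neqAle eq_sym p_neq1.
right; case u_def: (u_invariant F) => [d|]; last by right; split=> //; right; exists p.
have [m [d_even le_md le_pm]] := u_invariant_pyth p_def p_ge2 u_def.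
by left; exists m, d./2, p; rewrite mul2n even_halfK.
Qed.

Lemma pythagoras_Ikt_zero k : (1 <= k)%N -> Ikt_zero F k ->
  exists p, pythagoras_number F = Some p /\ (p <= 2 ^ k.-1)%N.
Proof.
case: k => // j _ Ikt0 /=.
suff bound : pythagoras_bound (pow2 j).
  have [p [p_bound p_min]] := classical_ex_min bound.
  by exists p; split; [apply: ext_minE | rewrite -pow2E; apply: p_min].
apply: NNPP => not_bound.
have [x [x_sq x_nsq]] := not_pythagoras_bound (pow2_gt0 j) not_bound.
have x0 := not_sum_of_n_squares_neq0 x_nsq.
have [m1 [m2 hyperbolic]] :=
  Ikt0 _ (nondeg_pfister (N := pow2 j) x0) (pfister_in_Ik j x0) (torsion_pfister HP j x0 x_sq).
have := anisotropic_witt_zero (anisotropic_pfister HP x_nsq) hyperbolic.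
by rewrite size_pfister; have := pow2_gt0 j; lia.
Qed.

End Invariants.

Unset Implicit Arguments.
Close Scope ring_scope.

Theorem theorem2p4 (F : fieldType) (char2 : (2%:R : F)%R != 0%R)
  (realF : real_field F) :
  in_N (pythagoras_number F) (u_invariant F) /\
  (forall k : nat, (1 <= k)%N -> Ikt_zero F k ->
     exists p, pythagoras_number F = Some p /\ (p <= 2 ^ k.-1)%N).
Proof.
case: realF => Pos HP.
by split; [apply: (pythagoras_u_in_N HP) | apply: (pythagoras_Ikt_zero HP)].
Qed.
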